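(* For every $v\in\mathrm{Pl}_n$, the graph $G_v$ is the disjoint union of a complete multipartite graph and a set of isolated nodes; i.e., if $U\subseteq[n]$ is the set of non-isolated nodes of $G_v$, then the induced subgraph of $G_v$ on $U$ is a complete multipartite graph (equivalently, non-adjacency is an equivalence relation on $U$).
   Context: Coordinates of $\mathbb R^{\binom n2}$ are indexed by unordered pairs $\{i,j\}\subset[n]$, written $v_{ij}=v_{ji}$. $\mathrm{Pl}_n=\{v\in\mathbb R_{\ge0}^{\binom n2} : v_{ij}v_{kl}\le v_{ik}v_{jl}+v_{il}v_{jk}\ \text{for all pairwise distinct } i,j,k,l\in[n]\}$. For $v\in\mathrm{Pl}_n$, $G_v$ is the graph with vertex set $[n]$ in which $\{i,j\}$ is an edge iff $v_{ij}>0$. *)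

From Stdlib Require Import Reals.
Open Scope R_scope.

(* Vertex set [n] is represented as {0,...,n-1} (nat with i < n).
   A vector v in R^{binom n 2} is represented as a symmetric function
   v : nat -> nat -> R; only the values v i j with i <> j, i,j < n matter. *)

Definition sym_vec (n : nat) (v : nat -> nat -> R) : Prop :=
  forall i j, (i < n)%nat -> (j < n)%nat -> i <> j -> v i j = v j i.

Definition Pl (n : nat) (v : nat -> nat -> R) : Prop :=
  sym_vec n v /\
  (forall i j, (i < n)%nat -> (j < n)%nat -> i <> j -> 0 <= v i j) /\
  (forall i j k l, (i < n)%nat -> (j < n)%nat -> (k < n)%nat -> (l < n)%nat ->
     i <> j -> i <> k -> i <> l -> j <> k -> j <> l -> k <> l ->
     v i j * v k l <= v i k * v j l + v i l * v j k).

Definition adj (v : nat -> nat -> R) (i j : nat) : Prop := i <> j /\ 0 < v i j.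

Definition nonisolated (n : nat) (v : nat -> nat -> R) (i : nat) : Prop :=
  (i < n)%nat /\ exists j, (j < n)%nat /\ adj v i j.

Definition complete_multipartite_on (U : nat -> Prop) (E : nat -> nat -> Prop) : Prop :=
  exists f : nat -> nat,
    forall i j, U i -> U j -> i <> j -> (E i j <-> f i <> f j).

(* If v_ab = v_bc = 0 and b has a neighbour l in G_v, the Plücker inequality
   v_ac v_bl <= v_ab v_cl + v_al v_cb = 0 forces v_ac = 0.  So on the
   non-isolated vertices non-adjacency is transitive, hence an equivalence
   relation, and its classes are the parts of a complete multipartite graph. *)

From Stdlib Require Import Reals Lra Psatz.
From Stdlib Require Import Classical ClassicalEpsilon
  FunctionalExtensionality PropExtensionality.
Open Scope R_scope.

Definition coadj (E : nat -> nat -> Prop) (i j : nat) : Prop := i = j \/ ~ E i j.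

Section EquivalenceClasses.

Variables (U : nat -> Prop) (E : nat -> nat -> Prop).

Hypothesis coadj_sym :
  forall i j, U i -> U j -> coadj E i j -> coadj E j i.
Hypothesis coadj_trans :
  forall i j k, U i -> U j -> U k -> coadj E i j -> coadj E j k -> coadj E i k.

Definition coadj_class (i : nat) (k : nat) : Prop := U k /\ coadj E i k.

(* Each vertex is labelled by a chosen member of its class; the choice only
   depends on the class as a predicate, so equal classes get equal labels. *)
Definition class_label (i : nat) : nat := epsilon (inhabits 0%nat) (coadj_class i).

Lemma class_label_spec i : U i -> coadj_class i (class_label i).
Proof.
  intros Ui; unfold class_label; apply epsilon_spec; exists i; split; [exact Ui | now left].
Qed.

Lemma coadj_class_eq i j :
  U i -> U j -> coadj E i j -> coadj_class i = coadj_class j.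
Proof.
  intros Ui Uj Hij; apply functional_extensionality; intros k.
  apply propositional_extensionality; split; intros [Uk Hk]; split; auto.
  - exact (coadj_trans j i k Uj Ui Uk (coadj_sym i j Ui Uj Hij) Hk).
  - exact (coadj_trans i j k Ui Uj Uk Hij Hk).
Qed.

Lemma complete_multipartite_of_coadj_equiv : complete_multipartite_on U E.
Proof.
  exists class_label; intros i j Ui Uj Hij; split.
  - intros Eij Hlab.
    destruct (class_label_spec i Ui) as [Uk Hik].
    destruct (class_label_spec j Uj) as [_ Hjk]; rewrite <- Hlab in Hjk.
    destruct (coadj_trans i _ j Ui Uk Uj Hik (coadj_sym j _ Uj Uk Hjk))
      as [|nEij]; contradiction.
  - intros Hlab; apply NNPP; intros nEij; apply Hlab.
    unfold class_label; now rewrite (coadj_class_eq i j Ui Uj (or_intror nEij)).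
Qed.

End EquivalenceClasses.

Section PluckerGraph.

Variables (n : nat) (v : nat -> nat -> R).
Hypothesis Hv : Pl n v.

Lemma Pl_adj_sym i j : (i < n)%nat -> (j < n)%nat -> adj v i j -> adj v j i.
Proof.
  destruct Hv as [Hs _]; intros Hi Hj [Hij Hpos].
  split; [auto | now rewrite Hs].
Qed.

Lemma Pl_nonadj_eq0 i j :
  (i < n)%nat -> (j < n)%nat -> i <> j -> ~ adj v i j -> v i j = 0.
Proof.
  destruct Hv as [_ [Hnn _]]; intros Hi Hj Hij Hnadj.
  destruct (Rle_lt_or_eq_dec 0 (v i j) (Hnn i j Hi Hj Hij)) as [Hpos|]; auto.
  now exfalso; apply Hnadj.
Qed.

Lemma Pl_zero_trans a b c :
  nonisolated n v b -> (a < n)%nat -> (c < n)%nat ->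
  a <> b -> b <> c -> a <> c ->
  v a b = 0 -> v b c = 0 -> v a c = 0.
Proof.
  destruct Hv as [Hs [Hnn Hpl]].
  intros [Hb [l [Hl [Hbl Hvbl]]]] Ha Hc Hab Hbc Hac Vab Vbc.
  assert (Hla : l <> a) by (intros ->; rewrite Hs in Vab; auto; lra).
  assert (Hlc : l <> c) by (intros ->; lra).
  pose proof (Hpl a c b l Ha Hc Hb Hl Hac Hab (not_eq_sym Hla)
                (not_eq_sym Hbc) (not_eq_sym Hlc) Hbl) as Hineq.
  rewrite Vab, (Hs c b Hc Hb (not_eq_sym Hbc)), Vbc in Hineq.
  pose proof (Hnn a c Ha Hc Hac).
  nra.
Qed.

Lemma Pl_coadj_sym i j :
  nonisolated n v i -> nonisolated n v j -> coadj (adj v) i j -> coadj (adj v) j i.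
Proof.
  intros [Hi _] [Hj _] [->|Hnadj]; [now left | right].
  intros Hji; apply Hnadj, Pl_adj_sym; auto.
Qed.

Lemma Pl_coadj_trans a b c :
  nonisolated n v a -> nonisolated n v b -> nonisolated n v c ->
  coadj (adj v) a b -> coadj (adj v) b c -> coadj (adj v) a c.
Proof.
  intros Ua Ub Uc [<-|Hab]; [easy|]; intros [<-|Hbc]; [now right|].
  destruct (classic (a = b)) as [<-|Hab']; [now right|].
  destruct (classic (b = c)) as [<-|Hbc']; [now right|].
  destruct (classic (a = c)) as [|Hac]; [now left | right].
  destruct Ua as [Ha _], Uc as [Hc _].
  assert (Hb : (b < n)%nat) by apply Ub.
  intros [_ Hpos].
  rewrite (Pl_zero_trans a b c Ub Ha Hc Hab' Hbc' Hac) in Hpos;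
    [lra | apply Pl_nonadj_eq0; auto ..].
Qed.

End PluckerGraph.

Theorem mainTheorem12 (n : nat) (v : nat -> nat -> R) :
  Pl n v ->
  complete_multipartite_on (nonisolated n v) (adj v).
Proof.
  intros Hv; apply complete_multipartite_of_coadj_equiv.
  - exact (Pl_coadj_sym n v Hv).
  - exact (Pl_coadj_trans n v Hv).
Qed.
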